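(* There exist absolute constants $C>0$ and $t_0$ such that for all sufficiently large $n$, every integer $t\ge t_0$ and every integer $s$ with $2t\le s\le n/2$, there exists a graph $G$ on $n$ vertices with independence number $$\alpha(G)\le C\, t\Big(\frac{n}{s}\Big)^{2t/(s-t)}\log (n/t)$$ such that every induced subgraph of $G$ on $s$ vertices contains an independent set of size $t$.
   Context: All logarithms are natural. $\alpha(G)$ denotes the maximum size of an independent set in $G$. The $O(\cdot)$ bound of the paper is expressed via an absolute constant. *)

From mathcomp Require Import all_boot.
From Stdlib Require Import Reals.

Set Implicit Arguments.
Unset Strict Implicit.
Unset Printing Implicit Defensive.

Definition simple_graph (n : nat) (e : rel 'I_n) : Prop :=
  symmetric e /\ irreflexive e.

Definition independent (n : nat) (e : rel 'I_n) (A : {set 'I_n}) : bool :=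
  [forall x in A, forall y in A, ~~ e x y].

Definition alpha (n : nat) (e : rel 'I_n) : nat :=
  \max_(A : {set 'I_n} | independent e A) #|A|.

(* Label each ordered pair of vertices independently and uniformly in 'I_(m+1), and let
   uw be an edge when (u,w) or (w,u) is labelled 0; probabilities become numbers of
   labellings.  Take m+1 of order t (n/s)^(2t/(s-t)) and k of order m log(n/t).  A union
   bound shows that some labelling has no independent k-set, so alpha < k, and no s-set S
   with M = s(s-t)/(2t) + 1 zero-labelled ordered pairs.  Such an S spans fewer than
   s(s-t)/(2t) edges, so the greedy Turan-type bound alpha(G[S]) >= s^2/(s + 2e(S))
   yields an independent t-subset of S. *)

From mathcomp Require Import all_boot zify.

Set Implicit Arguments.
Unset Strict Implicit.
Unset Printing Implicit Defensive.

Lemma exists_subset_card (T : finType) (A : {set T}) k :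
  k <= #|A| -> exists2 B : {set T}, B \subset A & #|B| = k.
Proof.
rewrite -bin_gt0 -cards_draws => /card_gt0P [B].
by rewrite inE => /andP [sBA /eqP cB]; exists B.
Qed.

Lemma exists_notin_set (T : finType) (B : {set T}) :
  #|B| < #|T| -> exists x, x \notin B.
Proof.
rewrite -(cardsC B) -addn1 leq_add2l => /card_gt0P [x].
by rewrite inE; exists x.
Qed.

Lemma card_bigcup_le (I T : finType) (P : pred I) (F : I -> {set T}) :
  #|\bigcup_(i | P i) F i| <= \sum_(i | P i) #|F i|.
Proof.
apply: (big_ind2 (fun (A : {set T}) k => #|A| <= k)) => [|A1 k1 A2 k2 h1 h2|//].
  by rewrite cards0.
by apply: leq_trans (leq_card_setU A1 A2) _; apply: leq_add.
Qed.

Lemma sum_draws (T : finType) k c :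
  \sum_(A : {set T} | #|A| == k) c = 'C(#|T|, k) * c.
Proof. by rewrite sum_nat_const -card_draws; congr (_ * _); apply: eq_card => A; rewrite inE. Qed.

Lemma card_set_in (T : finType) (S : {set T}) (P : pred T) :
  #|[set w in S | P w]| = \sum_(w in S) P w.
Proof.
rewrite -sum1_card big_mkcond [RHS]big_mkcond /=.
by apply: eq_bigr => w _; rewrite !inE; case: (w \in S); case: (P w).
Qed.

Lemma card_pairs_in (T : finType) (S : {set T}) (P : rel T) :
  #|[set p : T * T | [&& p.1 \in S, p.2 \in S & P p.1 p.2]]|
  = \sum_(u in S) #|[set w in S | P u w]|.
Proof.
rewrite -sum1_card; under [RHS]eq_bigr => u _ do rewrite card_set_in.
rewrite pair_big /= big_mkcond [RHS]big_mkcond /=.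
by apply: eq_bigr => p _; rewrite !inE; case: (p.1 \in S); case: (p.2 \in S); case: P.
Qed.

Lemma card_pairs_in_r (T : finType) (S : {set T}) (P : rel T) :
  #|[set p : T * T | [&& p.1 \in S, p.2 \in S & P p.1 p.2]]|
  = \sum_(w in S) #|[set u in S | P u w]|.
Proof.
rewrite card_pairs_in; under eq_bigr => u _ do rewrite card_set_in.
by under [RHS]eq_bigr => w _ do rewrite card_set_in; apply: exchange_big.
Qed.

Lemma card_ffun_forall_in (aT rT : finType) (F : aT -> {set rT}) :
  #|[set f : {ffun aT -> rT} | [forall x, f x \in F x]]| = \prod_x #|F x|.
Proof.
have := card_family (fun x => mem (F x)).
rewrite foldrE big_map -big_enum /= => <-.
by apply: eq_card => f; rewrite !inE; apply/forallP/familyP => fF x; apply: fF.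
Qed.

Lemma card_ffun_restricted (aT rT : finType) (D : {set aT}) (A : {set rT}) :
  #|[set f : {ffun aT -> rT} | [forall x in D, f x \in A]]|
  = #|A| ^ #|D| * #|rT| ^ (#|aT| - #|D|).
Proof.
pose F x := if x \in D then A else setT.
have -> : [set f : {ffun aT -> rT} | [forall x in D, f x \in A]]
          = [set f : {ffun aT -> rT} | [forall x, f x \in F x]].
  apply/setP => f; rewrite !inE /F.
  by apply/forallP/forallP => fA x; move: (fA x); case: (x \in D); rewrite ?inE.
rewrite card_ffun_forall_in (bigID [in D]) /=.
rewrite (eq_bigr (fun=> #|A|)) => [|x xD]; last by rewrite /F xD.
rewrite [X in _ * X](eq_bigr (fun=> #|rT|)) => [|x /negbTE xD]; last by rewrite /F xD cardsT.
rewrite !prod_nat_const -(cardsC D); congr (_ * _ ^ _).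
by rewrite addKn; apply: eq_card => x; rewrite !inE.
Qed.

Lemma bin_fact_le_expn N j : 'C(N, j) * j`! <= N ^ j.
Proof.
rewrite bin_ffact ffact_prod -[X in N ^ X]card_ord -prod_nat_const.
by apply: leq_prod => i _; apply: leq_subr.
Qed.

(* The second inequality is the AM-GM bound ((t+1)x - s)^2 >= 0 in disguise. *)
Lemma turan_step_arith (t s x w w' : nat) :
  t.+1 * w <= s * s -> w' + x * x <= w -> s * x <= w -> 0 < x <= s ->
  t <= s - x /\ t * w' <= (s - x) * (s - x).
Proof.
move=> hw hw' hsx /andP [x0 xs].
have [a sax] : exists a, s = a + x by exists (s - x); lia.
subst s; rewrite addnK; split.
  have : (a + x) * (t.+1 * x) <= (a + x) * (a + x).
    by rewrite mulnCA; apply: (leq_trans _ hw); rewrite leq_mul2l hsx orbT.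
  rewrite leq_pmul2l; nia.
have := leq_mul (leqnn t) (leq_trans (leq_mul (leqnn t.+1) hw') hw).
have := (nat_AGM2 (t.+1 * x) (a + x)).1; rewrite -mulnn.
rewrite -(leq_pmul2l (ltn0Sn t)); nia.
Qed.

Section CaroWei.
Variables (n : nat) (e : rel 'I_n).

Lemma independentS (A B : {set 'I_n}) :
  B \subset A -> independent e A -> independent e B.
Proof.
move=> sBA /forallP indA; apply/forallP => x; apply/implyP => xB.
apply/forallP => y; apply/implyP => yB.
move/implyP: (indA x) => /(_ (subsetP sBA _ xB)) /forallP /(_ y) /implyP.
by apply; apply: (subsetP sBA).
Qed.

Lemma independent0 : independent e set0.
Proof. by apply/forallP => x; rewrite inE. Qed.

Lemma alpha_lt k :
  (forall K : {set 'I_n}, #|K| = k -> ~~ independent e K) -> alpha e < k.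
Proof.
move=> noK; rewrite /alpha (bigmax_eq_arg _ independent0).
case: arg_maxnP => [|A indA _]; first exact: independent0.
rewrite ltnNge; apply/negP => /exists_subset_card [K sKA cK].
by move: (noK K cK); rewrite (independentS sKA indA).
Qed.

Hypotheses (e_sym : symmetric e) (e_irr : irreflexive e).

Lemma independentU1 v (I : {set 'I_n}) :
  (forall y, y \in I -> ~~ e v y) -> independent e I -> independent e (v |: I).
Proof.
move=> nadj /forallP indI.
apply/forallP => x; apply/implyP; rewrite !inE => /orP [/eqP -> | xI];
  apply/forallP => y; apply/implyP; rewrite !inE => /orP [/eqP -> | yI].
- by rewrite e_irr.
- exact: nadj.
- by rewrite e_sym nadj.
- by move/implyP: (indI x) => /(_ xI) /forallP /(_ y) /implyP; apply.
Qed.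

Definition closed_nbhd (S : {set 'I_n}) u := [set w in S | (w == u) || e u w].

Definition nbhd_weight (S : {set 'I_n}) := \sum_(u in S) #|closed_nbhd S u|.

Lemma closed_nbhd_sub (S : {set 'I_n}) u : closed_nbhd S u \subset S.
Proof. by apply/subsetP => w; rewrite inE => /andP []. Qed.

Lemma nbhd_weight_removal (S : {set 'I_n}) v :
  (forall u, u \in S -> #|closed_nbhd S v| <= #|closed_nbhd S u|) ->
  nbhd_weight (S :\: closed_nbhd S v) + #|closed_nbhd S v| * #|closed_nbhd S v|
  <= nbhd_weight S.
Proof.
set N := closed_nbhd S v => vmin; have NS := closed_nbhd_sub S v.
have -> : nbhd_weight S
          = \sum_(u in N) #|closed_nbhd S u| + \sum_(u in S :\: N) #|closed_nbhd S u|.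
  rewrite /nbhd_weight (bigID [in N]) /=; congr (_ + _); apply: eq_bigl => u.
    by apply/andP/idP => [[] //|uN]; rewrite (subsetP NS).
  by rewrite in_setD andbC.
rewrite [X in _ <= X]addnC; apply: leq_add.
  rewrite /nbhd_weight; apply: leq_sum => u _; apply: subset_leq_card; apply/subsetP => w.
  by rewrite !inE => /andP [/andP [_ ->] ->].
by rewrite -sum_nat_const; apply: leq_sum => u /(subsetP NS)/vmin.
Qed.

Lemma exists_independent_of_nbhd_weight t (S : {set 'I_n}) :
  t <= #|S| -> t * nbhd_weight S <= #|S| * #|S| ->
  exists I : {set 'I_n}, I \subset S /\ #|I| = t /\ independent e I.
Proof.
elim: t S => [|t IH] S ht hW.
  by exists set0; rewrite sub0set cards0; split => //; split => //; apply: independent0.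
have /card_gt0P [v0 v0S] : 0 < #|S| by lia.
pose v := [arg min_(v < v0 in S) #|closed_nbhd S v|].
have [vS vmin] : v \in S /\ forall u, u \in S -> #|closed_nbhd S v| <= #|closed_nbhd S u|.
  by rewrite /v; case: arg_minnP.
set N := closed_nbhd S v.
have vN : v \in N by rewrite inE vS eqxx.
have lower : #|S| * #|N| <= nbhd_weight S.
  by rewrite /nbhd_weight -sum_nat_const; apply: leq_sum => u /vmin.
have N_gt0 : 0 < #|N| <= #|S|.
  by rewrite subset_leq_card ?closed_nbhd_sub // andbT; apply/card_gt0P; exists v.
have [ht' hW'] := turan_step_arith hW (nbhd_weight_removal vmin) lower N_gt0.
rewrite -cardsDS ?closed_nbhd_sub // in ht' hW'.
have [I [IS' [cI indI]]] := IH _ ht' hW'.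
have vI : v \notin I by apply: contraL vN => /(subsetP IS'); rewrite inE => /andP [].
exists (v |: I); split; [|split].
- by rewrite subUset sub1set vS (subset_trans IS') ?subsetDl.
- by rewrite cardsU1 vI cI.
apply: independentU1 indI => y /(subsetP IS'); rewrite inE => /andP [yN yS].
by apply: contraNN yN => evy; rewrite inE yS evy orbT.
Qed.

End CaroWei.

Section Labellings.
Variables n m : nat.
Local Notation labelling := {ffun 'I_n * 'I_n -> 'I_m.+1}.

Definition label_graph (f : labelling) : rel 'I_n :=
  fun u w => (u != w) && ((f (u, w) == ord0) || (f (w, u) == ord0)).

Lemma label_graph_simple f : simple_graph (label_graph f).
Proof. by split => [u w | u]; rewrite /label_graph ?eqxx // eq_sym orbC. Qed.

Definition offdiag (S : {set 'I_n}) :=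
  [set p : 'I_n * 'I_n | [&& p.1 \in S, p.2 \in S & p.1 != p.2]].

Definition zero_pairs (f : labelling) S := [set p in offdiag S | f p == ord0].

Lemma card_offdiag (S : {set 'I_n}) : #|offdiag S| = #|S| * (#|S| - 1).
Proof.
rewrite (card_pairs_in S (fun x y => x != y)) -sum_nat_const; apply: eq_bigr => u uS.
rewrite (cardsD1 u S) uS add1n subn1 /=.
by apply: eq_card => w; rewrite !inE andbC eq_sym.
Qed.

Lemma nbhd_weight_label_graph f (S : {set 'I_n}) :
  nbhd_weight (label_graph f) S <= #|S| + 2 * #|zero_pairs f S|.
Proof.
pose out u := [set w in S | (u != w) && (f (u, w) == ord0)].
pose inc u := [set w in S | (w != u) && (f (w, u) == ord0)].
pose P x y := (x != y) && (f (x, y) == ord0).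
have zero_pairsE : zero_pairs f S =
    [set p : 'I_n * 'I_n | [&& p.1 \in S, p.2 \in S & P p.1 p.2]].
  by apply/setP => -[x y]; rewrite !inE -!andbA.
have card_out : #|zero_pairs f S| = \sum_(u in S) #|out u|.
  by rewrite zero_pairsE (card_pairs_in S P).
have card_inc : #|zero_pairs f S| = \sum_(u in S) #|inc u|.
  by rewrite zero_pairsE (card_pairs_in_r S P).
rewrite mul2n -addnn {1}card_out card_inc -!big_split /= -sum1_card -big_split /=.
apply: leq_sum => u uS.
have sub_nbhd : closed_nbhd (label_graph f) S u \subset u |: (out u :|: inc u).
  apply/subsetP => w; rewrite !inE /label_graph.
  case/andP => wS /orP [-> //| /andP [uw /orP [h|h]]];
    by rewrite wS h ?uw ?(eq_sym w u) ?uw ?orbT.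
apply: leq_trans (subset_leq_card sub_nbhd) _.
rewrite cardsU1 leq_add ?leq_b1 //; exact: leq_card_setU.
Qed.

Lemma exists_independent_of_few_zero_pairs f t (S : {set 'I_n}) :
  0 < t <= #|S| -> 2 * t * #|zero_pairs f S| <= #|S| * (#|S| - t) ->
  exists I : {set 'I_n}, I \subset S /\ #|I| = t /\ independent (label_graph f) I.
Proof.
case/andP=> t_gt0 tS fewZ; have [e_sym e_irr] := label_graph_simple f.
apply: exists_independent_of_nbhd_weight => //.
apply: leq_trans (leq_mul (leqnn t) (nbhd_weight_label_graph f S)) _.
nia.
Qed.

Lemma card_labellings_nonzero_on (D : {set 'I_n * 'I_n}) :
  #|[set f : labelling | [forall p in D, f p != ord0]]|
  = m ^ #|D| * m.+1 ^ (n * n - #|D|).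
Proof.
have := card_ffun_restricted D [set~ (ord0 : 'I_m.+1)].
rewrite cardsC1 card_prod !card_ord /= => <-.
by apply: eq_card => f; rewrite !inE; apply: eq_forallb => p; rewrite !inE.
Qed.

Lemma card_labellings_zero_on (Q : {set 'I_n * 'I_n}) :
  #|[set f : labelling | [forall p in Q, f p == ord0]]| = m.+1 ^ (n * n - #|Q|).
Proof.
have := card_ffun_restricted Q [set (ord0 : 'I_m.+1)].
rewrite cards1 exp1n mul1n card_prod !card_ord => <-.
by apply: eq_card => f; rewrite !inE; apply: eq_forallb => p; rewrite !inE.
Qed.

Definition independent_event k :=
  \bigcup_(K : {set 'I_n} | #|K| == k)
     [set f : labelling | [forall p in offdiag K, f p != ord0]].

Definition dense_event s M :=
  \bigcup_(S : {set 'I_n} | #|S| == s)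
     \bigcup_(Q : {set 'I_n * 'I_n} | (Q \subset offdiag S) && (#|Q| == M))
        [set f : labelling | [forall p in Q, f p == ord0]].

Lemma card_independent_event k :
  #|independent_event k| * m.+1 ^ (k * (k - 1))
  <= 'C(n, k) * m ^ (k * (k - 1)) * m.+1 ^ (n * n).
Proof.
have bound : #|independent_event k|
             <= 'C(n, k) * (m ^ (k * (k - 1)) * m.+1 ^ (n * n - k * (k - 1))).
  apply: leq_trans (card_bigcup_le _ _) _.
  rewrite (eq_bigr (fun=> m ^ (k * (k - 1)) * m.+1 ^ (n * n - k * (k - 1)))).
    by rewrite sum_draws card_ord.
  by move=> K /eqP cK; rewrite card_labellings_nonzero_on card_offdiag cK.
have [ltnk | lekn] := ltnP n k.
  by move: bound; rewrite bin_small // mul0n leqn0 => /eqP ->.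
have kk_le : k * (k - 1) <= n * n by rewrite leq_mul // (leq_trans (leq_subr 1 k)).
apply: leq_trans (leq_mul bound (leqnn _)) _.
by rewrite -!mulnA -expnD subnK.
Qed.

Lemma card_dense_event s M :
  #|dense_event s M| * m.+1 ^ M <= 'C(n, s) * 'C(s * (s - 1), M) * m.+1 ^ (n * n).
Proof.
have bound : #|dense_event s M| <= 'C(n, s) * ('C(s * (s - 1), M) * m.+1 ^ (n * n - M)).
  apply: leq_trans (card_bigcup_le _ _) _.
  apply: (@leq_trans (\sum_(S : {set 'I_n} | #|S| == s)
                        ('C(s * (s - 1), M) * m.+1 ^ (n * n - M))));
    last by rewrite sum_draws card_ord.
  apply: leq_sum => S /eqP cS.
  apply: leq_trans (card_bigcup_le _ _) _.
  rewrite (eq_bigr (fun=> m.+1 ^ (n * n - M))) => [|Q /andP [_ /eqP cQ]]; last first.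
    by rewrite card_labellings_zero_on cQ.
  rewrite sum_nat_const -cS -card_offdiag -cards_draws.
  by apply: eq_leq; congr (_ * _); apply: eq_card => Q; rewrite inE.
have [ltMs | leMs] := ltnP (s * (s - 1)) M.
  by move: bound; rewrite (bin_small ltMs) mul0n muln0 leqn0 => /eqP ->.
have [ltns | lesn] := ltnP n s.
  by move: bound; rewrite (bin_small ltns) mul0n leqn0 => /eqP ->.
have M_le : M <= n * n.
  by apply: leq_trans leMs (leq_mul lesn (leq_trans (leq_subr 1 s) lesn)).
apply: leq_trans (leq_mul bound (leqnn _)) _.
by rewrite -!mulnA -expnD subnK.
Qed.

Lemma notin_independent_event f k (K : {set 'I_n}) :
  f \notin independent_event k -> #|K| = k -> ~~ independent (label_graph f) K.
Proof.
move=> fE cK; apply: contra fE => indK; apply/bigcupP; exists K; first by rewrite cK.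
rewrite inE; apply/forallP => -[x y]; apply/implyP; rewrite inE /= => /and3P [xK yK xy].
move/forallP: indK => /(_ x); rewrite xK => /forallP /(_ y); rewrite yK /label_graph xy /=.
by rewrite negb_or => /andP [].
Qed.

Lemma notin_dense_event f s M (S : {set 'I_n}) :
  f \notin dense_event s M -> #|S| = s -> #|zero_pairs f S| < M.
Proof.
move=> fE cS; rewrite ltnNge; apply: contra fE => /exists_subset_card [Q QZ cQ].
apply/bigcupP; exists S; first by rewrite cS.
apply/bigcupP; exists Q.
  rewrite cQ eqxx andbT; apply: subset_trans QZ _.
  by apply/subsetP => p; rewrite inE => /andP [].
by rewrite inE; apply/forallP => p; apply/implyP => /(subsetP QZ); rewrite inE => /andP [].
Qed.

Lemma exists_labelling_outside_events k s M :
  'C(n, k) * m ^ (k * (k - 1)) * m.+1 ^ M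
    + 'C(n, s) * 'C(s * (s - 1), M) * m.+1 ^ (k * (k - 1))
  < m.+1 ^ (k * (k - 1)) * m.+1 ^ M ->
  exists f : labelling, f \notin independent_event k :|: dense_event s M.
Proof.
set b := m.+1; set K2 := k * (k - 1) => hc; apply: exists_notin_set.
have b_gt0 : 0 < b ^ K2 * b ^ M by rewrite muln_gt0 !expn_gt0.
rewrite card_ffun card_prod !card_ord -(ltn_pmul2r b_gt0).
apply: leq_ltn_trans (leq_mul (leq_card_setU _ _) (leqnn _)) _.
apply: (@leq_ltn_trans ('C(n, k) * m ^ K2 * b ^ (n * n) * b ^ M
                        + 'C(n, s) * 'C(s * (s - 1), M) * b ^ (n * n) * b ^ K2)).
  rewrite mulnDl; apply: leq_add.
    by rewrite mulnA leq_mul2r card_independent_event orbT.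
  by rewrite (mulnC (b ^ K2)) mulnA leq_mul2r card_dense_event orbT.
by rewrite !(mulnAC _ (b ^ (n * n))) -mulnDl mulnC ltn_pmul2l ?expn_gt0.
Qed.

End Labellings.

Definition dense_threshold s t := s * (s - t) %/ (2 * t) + 1.

Lemma dense_threshold_ge s t : 0 < t -> s * (s - t) <= dense_threshold s t * (2 * t).
Proof. by move=> t_gt0; rewrite /dense_threshold addn1 ltnW // ltn_ceil // muln_gt0. Qed.

Lemma exists_graph_of_counting n m k s t :
  0 < t <= s ->
  'C(n, k) * m ^ (k * (k - 1)) * m.+1 ^ dense_threshold s t
    + 'C(n, s) * 'C(s * (s - 1), dense_threshold s t) * m.+1 ^ (k * (k - 1))
  < m.+1 ^ (k * (k - 1)) * m.+1 ^ dense_threshold s t ->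
  exists e : rel 'I_n, [/\ simple_graph e, alpha e < k &
    forall S : {set 'I_n}, #|S| = s ->
      exists I : {set 'I_n}, I \subset S /\ #|I| = t /\ independent e I].
Proof.
move=> /andP [t_gt0 ts] /exists_labelling_outside_events [f].
rewrite inE negb_or => /andP [f_indep f_dense].
exists (label_graph f); split; first exact: label_graph_simple.
  by apply: alpha_lt => K; apply: notin_independent_event.
move=> S cS; apply: exists_independent_of_few_zero_pairs; first by rewrite cS t_gt0.
have := notin_dense_event f_dense cS; rewrite /dense_threshold addn1 ltnS.
by rewrite leq_divRL ?muln_gt0 // mulnC cS.
Qed.

(* Reals is imported only now: it rebinds [^] in nat_scope to Nat.pow, so below
   natural powers are written [expn]. *)
From Stdlib Require Import Reals Lra ZArith.
Open Scope R_scope.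

Lemma INR_muln a b : INR (a * b)%nat = INR a * INR b.
Proof. exact: mult_INR. Qed.

Lemma INR_addn a b : INR (a + b)%nat = INR a + INR b.
Proof. exact: plus_INR. Qed.

Lemma INR_expn a b : INR (expn a b) = INR a ^ b.
Proof. by rewrite -pow_INR; congr INR; elim: b => // b IH; rewrite expnS IH. Qed.

Lemma INR_double_le a b : (2 * a <= b)%nat -> 2 * INR a <= INR b.
Proof. by move/leP/le_INR; rewrite INR_muln. Qed.

Lemma exp_le_compat x y : x <= y -> exp x <= exp y.
Proof. by case=> [/exp_increasing|->]; lra. Qed.

Lemma ln_le_compat x y : 0 < x -> x <= y -> ln x <= ln y.
Proof. by move=> x0; case=> [/(ln_increasing _ _ x0)|->]; lra. Qed.

Lemma pow_exp x j : exp x ^ j = exp (INR j * x).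
Proof.
elim: j => [|j IH]; first by rewrite /= Rmult_0_l exp_0.
by rewrite -tech_pow_Rmult IH -exp_plus S_INR; congr exp; ring.
Qed.

Lemma Rpower_ge1 x y : 1 <= x -> 0 <= y -> 1 <= Rpower x y.
Proof. by move=> x1 y0; rewrite -(Rpower_O x); [apply: Rle_Rpower | lra]. Qed.

Lemma exists_nat_between y : 0 <= y -> exists q : nat, y < INR q <= y + 1.
Proof.
move=> y0; have [up_gt up_le] := archimed y.
exists (Z.to_nat (up y)); rewrite INR_IZR_INZ Z2Nat.id; first lra.
by apply: le_IZR; lra.
Qed.

Lemma succ_pow_le_exp j : INR j.+1 ^ j <= exp 1 * INR j ^ j.
Proof.
case: j => [|j]; first by have := exp_ineq1_le 1; rewrite /=; lra.
set x := INR j.+1; have x_pos : 0 < x by apply: lt_0_INR; apply/ltP.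
have -> : INR j.+2 = x * (1 + / x) by rewrite S_INR -/x; field; lra.
rewrite Rpow_mult_distr Rmult_comm; apply: Rmult_le_compat_r; first by apply: pow_le; lra.
apply: Rle_trans (pow_incr _ _ _ _) _.
  by split; [have := Rinv_0_lt_compat x x_pos; lra | apply: exp_ineq1_le].
by rewrite pow_exp -/x Rinv_r; lra.
Qed.

Lemma pow_self_le_exp_fact j : INR j ^ j <= exp 1 ^ j * INR j`!.
Proof.
elim: j => [|j IH]; first by rewrite /=; lra.
rewrite factS INR_muln -!tech_pow_Rmult.
have j1_pos : 0 <= INR j.+1 by apply: pos_INR.
apply: Rle_trans (Rmult_le_compat_l _ _ _ j1_pos (succ_pow_le_exp j)) _.
have e_pos := exp_pos 1.
have := Rmult_le_compat_l _ _ _ (Rmult_le_pos _ _ j1_pos (Rlt_le _ _ e_pos)) IH.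
lra.
Qed.

Lemma binomial_le_pow N j t :
  (0 < t <= j)%nat -> INR 'C(N, j) <= (exp 1 * INR N / INR t) ^ j.
Proof.
case/andP=> t_gt0 tj.
have t_pos : 0 < INR t by apply: lt_0_INR; apply/ltP.
have tj' : INR t ^ j <= INR j ^ j by apply: pow_incr; split; [lra | apply/le_INR/leP].
have C_pos : 0 <= INR 'C(N, j) by apply: pos_INR.
have fact_le : INR 'C(N, j) * INR j`! <= INR N ^ j.
  by rewrite -INR_muln -INR_expn; apply/le_INR/leP/bin_fact_le_expn.
have C_le : INR 'C(N, j) * INR t ^ j <= exp 1 ^ j * INR N ^ j.
  apply: Rle_trans (Rmult_le_compat_l _ _ _ C_pos tj') _.
  apply: Rle_trans (Rmult_le_compat_l _ _ _ C_pos (pow_self_le_exp_fact j)) _.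
  have := Rmult_le_compat_l _ _ _ (pow_le _ j (Rlt_le _ _ (exp_pos 1))) fact_le.
  lra.
have tj_pos : 0 < INR t ^ j by apply: pow_lt.
apply: (Rmult_le_reg_r (INR t ^ j)) => //; apply: Rle_trans C_le _; right.
rewrite /Rdiv !Rpow_mult_distr pow_inv; field; lra.
Qed.

Lemma independent_prob_lt_half n t k m :
  (0 < t <= k)%nat -> (t <= n)%nat ->
  INR m.+1 * (ln (INR n / INR t) + 2) <= INR k - 1 ->
  INR 'C(n, k) * (INR m / INR m.+1) ^ (k * (k - 1)) < 1 / 2.
Proof.
move=> tk tn hk; case/andP: (tk) => t_gt0 t_le_k.
have t_pos : 0 < INR t by apply: lt_0_INR; apply/ltP.
have n_pos : 0 < INR n by apply: lt_0_INR; apply/ltP; lia.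
have k1 : 1 <= INR k by apply: (le_INR 1); apply/leP; lia.
have B_pos : 0 < INR m.+1 by apply: lt_0_INR; apply/ltP.
set L := ln (INR n / INR t) in hk.
have C_le : INR 'C(n, k) <= exp (INR k * (1 + L)).
  rewrite -pow_exp exp_plus /L exp_ln; last by apply: Rdiv_lt_0_compat.
  by rewrite Rmult_div_assoc; apply: binomial_le_pow.
have ratio_pos : 0 <= INR m / INR m.+1.
  by apply: Rmult_le_pos; [apply: pos_INR | left; apply: Rinv_0_lt_compat].
have ratio_le : INR m / INR m.+1 <= exp (- / INR m.+1).
  apply: (Rle_trans _ _ _ _ (exp_ineq1_le _)); right.
  by rewrite S_INR; field; have := pos_INR m; lra.
have Q_le : (INR m / INR m.+1) ^ (k * (k - 1)) <= exp (- (INR k * (INR k - 1)) / INR m.+1).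
  apply: Rle_trans (pow_incr _ _ _ (conj ratio_pos ratio_le)) _.
  rewrite pow_exp INR_muln minus_INR ?INR_1; last by apply/leP; lia.
  by right; congr exp; field; lra.
have exponent_le : INR k * (1 + L) + - (INR k * (INR k - 1)) / INR m.+1 <= -1.
  have : INR k * (L + 2) <= INR k * (INR k - 1) / INR m.+1.
    apply: (Rmult_le_reg_r (INR m.+1)) => //.
    have -> : INR k * (INR k - 1) / INR m.+1 * INR m.+1 = INR k * (INR k - 1).
      by field; lra.
    nra.
  have -> : - (INR k * (INR k - 1)) / INR m.+1 = - (INR k * (INR k - 1) / INR m.+1).
    by field; lra.
  lra.
apply: Rle_lt_trans (Rmult_le_compat _ _ _ _ (pos_INR _) (pow_le _ _ ratio_pos) C_le Q_le) _.
rewrite -exp_plus; apply: Rle_lt_trans (exp_le_compat exponent_le) _.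
have := exp_ineq1 1 ltac:(lra); rewrite exp_Ropp => e_gt2.
by apply: (Rmult_lt_reg_l (exp 1)); [apply: exp_pos | rewrite Rinv_r; [lra | apply: exp_neq_0]].
Qed.

(* Taking logarithms: with c = s(s-t)/(2t) <= M one has c a = s, so
   s ln E + M ln rho <= s ln E + c (-ln 2 - a ln E) = -c ln 2 <= -ln 2. *)
Lemma pow_mul_pow_le_half E rho s t M :
  (0 < t)%nat -> (2 * t <= s)%nat -> (s * (s - t) <= M * (2 * t))%nat ->
  1 <= E -> 0 < rho -> 2 * rho * Rpower E (2 * INR t / (INR s - INR t)) <= 1 ->
  E ^ s * rho ^ M <= 1 / 2.
Proof.
move=> t_gt0 ts hM E1 rho_pos hrho.
have t1 : 1 <= INR t by apply: (le_INR 1); apply/leP.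
have ts' := INR_double_le ts.
have hM' : INR s * (INR s - INR t) <= INR M * (2 * INR t).
  move/leP/le_INR: hM; rewrite !INR_muln minus_INR; last by apply/leP; lia.
  by rewrite [INR 2]/=; lra.
set a := 2 * INR t / (INR s - INR t) in hrho.
set c := INR s * (INR s - INR t) / (2 * INR t).
have ca : c * a = INR s by rewrite /c /a; field; lra.
have c_le : 1 <= c <= INR M.
  have cE : c * (2 * INR t) = INR s * (INR s - INR t) by rewrite /c; field; lra.
  by split; apply: (Rmult_le_reg_r (2 * INR t)); nra.
have lnE : 0 <= ln E by rewrite -ln_1; apply: ln_le_compat; lra.
have ln_rho : ln 2 + ln rho + a * ln E <= 0.
  rewrite -ln_1 -ln_Rpower -!ln_mult; try lra; last by apply: exp_pos.
  by apply: ln_le_compat => //; apply: Rmult_lt_0_compat; [lra | apply: exp_pos].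
have ln2 := ln_lt_2.
have -> : E ^ s * rho ^ M = exp (INR s * ln E + INR M * ln rho).
  by rewrite exp_plus -!pow_exp !exp_ln //; lra.
have -> : 1 / 2 = exp (- ln 2) by rewrite exp_Ropp exp_ln; lra.
apply: exp_le_compat.
have a_pos : 0 <= a by apply: Rmult_le_pos; [lra | left; apply: Rinv_0_lt_compat; lra].
have rho_neg : ln rho <= 0 by nra.
have M_rho : INR M * ln rho <= - (c * ln 2) - INR s * ln E by rewrite -ca; nra.
nra.
Qed.

Lemma dense_prob_le_half n t s m M :
  (0 < t)%nat -> (2 * t <= s)%nat -> (s <= n)%nat -> (s * (s - t) <= M * (2 * t))%nat ->
  8 * exp 1 * INR t * Rpower (exp 1 * (INR n / INR s)) (2 * INR t / (INR s - INR t))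
    <= INR m.+1 ->
  INR 'C(n, s) * INR 'C(s * (s - 1), M) / INR m.+1 ^ M <= 1 / 2.
Proof.
move=> t_gt0 ts sn hM hm.
have t1 : 1 <= INR t by apply: (le_INR 1); apply/leP.
have ts' := INR_double_le ts.
have sn' : INR s <= INR n by apply/le_INR/leP.
have e1 : 1 <= exp 1 by have := exp_ineq1_le 1; lra.
have M_gt0 : (0 < M)%nat.
  by move: hM; case: M => //; rewrite mul0n leqn0 muln_eq0 subn_eq0; lia.
have hM' : INR s * INR s <= 4 * INR t * INR M.
  move/leP/le_INR: hM; rewrite !INR_muln minus_INR; last by apply/leP; lia.
  by rewrite [INR 2]/=; nra.
set E := exp 1 * (INR n / INR s).
have E1 : 1 <= E.
  have : 1 <= INR n / INR s by apply: (Rmult_le_reg_r (INR s)); [lra | field_simplify; lra].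
  by rewrite /E; nra.
set B := INR m.+1; have B_pos : 0 < B by apply: lt_0_INR; apply/ltP.
set rho := 4 * exp 1 * INR t / B.
have rho_pos : 0 < rho by apply: Rdiv_lt_0_compat => //; nra.
have C1 : INR 'C(n, s) <= E ^ s.
  by rewrite /E Rmult_div_assoc; apply: binomial_le_pow; rewrite leqnn andbT; lia.
have C2 : INR 'C(s * (s - 1), M) / B ^ M <= rho ^ M.
  have := binomial_le_pow (s * (s - 1)) (introT andP (conj M_gt0 (leqnn M))).
  set x := exp 1 * INR (s * (s - 1)) / INR M => hb.
  have M_pos : 0 < INR M by apply: lt_0_INR; apply/ltP.
  have x_pos : 0 <= x.
    apply: Rmult_le_pos; first by apply: Rmult_le_pos; [lra | apply: pos_INR].
    by left; apply: Rinv_0_lt_compat.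
  have x_le : x <= 4 * exp 1 * INR t.
    have N_le : INR (s * (s - 1)) <= 4 * INR t * INR M.
      apply: Rle_trans hM'; rewrite INR_muln; apply: Rmult_le_compat_l; first by apply: pos_INR.
      by apply/le_INR/leP/leq_subr.
    apply: (Rmult_le_reg_r (INR M)) => //.
    have -> : x * INR M = exp 1 * INR (s * (s - 1)) by rewrite /x; field; lra.
    nra.
  have BM_pos : 0 < B ^ M by apply: pow_lt.
  apply: Rle_trans (_ : (x / B) ^ M <= rho ^ M).
    rewrite /Rdiv Rpow_mult_distr pow_inv.
    by apply: Rmult_le_compat_r; [left; apply: Rinv_0_lt_compat | ].
  have B_inv : 0 <= / B by left; apply: Rinv_0_lt_compat.
  by apply: pow_incr; split; [apply: Rmult_le_pos | apply: Rmult_le_compat_r].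
have key : 2 * rho * Rpower E (2 * INR t / (INR s - INR t)) <= 1.
  apply: (Rmult_le_reg_r B) => //; rewrite Rmult_1_l; apply: (Rle_trans _ _ _ _ hm); right.
  by rewrite /rho /E; field; lra.
have := pow_mul_pow_le_half t_gt0 ts hM E1 rho_pos key.
have C2_pos : 0 <= INR 'C(s * (s - 1), M) / B ^ M.
  by apply: Rmult_le_pos; [apply: pos_INR | left; apply: Rinv_0_lt_compat; apply: pow_lt].
have := Rmult_le_compat _ _ _ _ (pos_INR _) C2_pos C1 C2.
rewrite /Rdiv Rmult_assoc; lra.
Qed.

Lemma counting_condition n m k s M :
  INR 'C(n, k) * (INR m / INR m.+1) ^ (k * (k - 1)) < 1 / 2 ->
  INR 'C(n, s) * INR 'C(s * (s - 1), M) / INR m.+1 ^ M <= 1 / 2 ->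
  ('C(n, k) * expn m (k * (k - 1)) * expn m.+1 M
     + 'C(n, s) * 'C(s * (s - 1), M) * expn m.+1 (k * (k - 1))
   < expn m.+1 (k * (k - 1)) * expn m.+1 M)%nat.
Proof.
rewrite /Rdiv Rpow_mult_distr pow_inv => hA hB.
apply/ltP/INR_lt; rewrite !(INR_addn, INR_muln, INR_expn).
have B_pos : 0 < INR m.+1 by apply: lt_0_INR; apply/ltP.
set u := INR m.+1 ^ (k * (k - 1)) in hA *; set v := INR m.+1 ^ M in hB *.
have u_pos : 0 < u by apply: pow_lt.
have v_pos : 0 < v by apply: pow_lt.
have hA' : INR 'C(n, k) * INR m ^ (k * (k - 1)) < u / 2.
  apply: (Rmult_lt_reg_r (/ u)); first exact: Rinv_0_lt_compat.
  have -> : u / 2 * / u = 1 / 2 by field; lra.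
  by rewrite Rmult_assoc.
have hB' : INR 'C(n, s) * INR 'C(s * (s - 1), M) <= v / 2.
  apply: (Rmult_le_reg_r (/ v)); first exact: Rinv_0_lt_compat.
  by have -> : v / 2 * / v = 1 / 2 by field; lra.
nra.
Qed.

Lemma exists_label_range t r a :
  1 <= t -> 1 <= r -> 0 <= a <= 2 ->
  exists q : nat, (1 < q)%nat /\
    8 * exp 1 * t * Rpower (exp 1 * r) a <= INR q <= 217 * (t * Rpower r a).
Proof.
move=> t1 r1 a02.
have e13 : 1 <= exp 1 <= 3 by split; [have := exp_ineq1_le 1; lra | apply: exp_le_3].
set Rp := Rpower r a; have Rp1 : 1 <= Rp by apply: Rpower_ge1; lra.
have ea : 1 <= exp a <= 9.
  split; first by have := exp_ineq1_le a; lra.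
  apply: Rle_trans (exp_le_compat (proj2 a02)) _.
  by rewrite (_ : 2 = 1 + 1) ?exp_plus; [nra | lra].
have XE : 8 * exp 1 * t * Rpower (exp 1 * r) a = 8 * (exp 1 * exp a) * (t * Rp).
  rewrite /Rp -Rpower_mult_distr; [ | apply: exp_pos | lra].
  by rewrite {1}/Rpower ln_exp Rmult_1_r; ring.
have eea : 1 <= exp 1 * exp a <= 27 by split; nra.
have tRp : 1 <= t * Rp by nra.
have X_bounds : 8 <= 8 * (exp 1 * exp a) * (t * Rp) <= 216 * (t * Rp) by split; nra.
have [q [Xq qX]] : exists q : nat,
    8 * (exp 1 * exp a) * (t * Rp) < INR q <= 8 * (exp 1 * exp a) * (t * Rp) + 1.
  by apply: exists_nat_between; lra.
exists q; rewrite XE; split; last by split; nra.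
by apply/ltP/INR_lt; rewrite [INR 1]/=; lra.
Qed.

Lemma exists_parameters n t s :
  (0 < t)%nat -> (2 * t <= s)%nat -> (2 * s <= n)%nat ->
  let r := INR n / INR s in let a := 2 * INR t / (INR s - INR t) in
  let L := ln (INR n / INR t) in
  exists m k : nat, [/\ (0 < t <= k)%nat, INR m.+1 * (L + 2) <= INR k - 1,
    8 * exp 1 * INR t * Rpower (exp 1 * r) a <= INR m.+1
    & INR k.-1 <= 1000 * INR t * Rpower r a * L].
Proof.
move=> t_gt0 ts sn r a L.
have t1 : 1 <= INR t by apply: (le_INR 1); apply/leP.
have ts' := INR_double_le ts; have sn' := INR_double_le sn.
have r1 : 1 <= r by apply: (Rmult_le_reg_r (INR s)); [lra | rewrite /r; field_simplify; lra].
have a02 : 0 <= a <= 2.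
  split; first by apply: Rmult_le_pos; [lra | left; apply: Rinv_0_lt_compat; lra].
  by apply: (Rmult_le_reg_r (INR s - INR t)); [lra | rewrite /a; field_simplify; lra].
have L1 : 1 <= L.
  rewrite -(ln_exp 1) /L; apply: ln_le_compat; first by apply: exp_pos.
  apply: (Rle_trans _ _ _ exp_le_3); apply: (Rmult_le_reg_r (INR t)); [lra | field_simplify; lra].
have [q [q_gt1 [Xq qX]]] := exists_label_range t1 r1 a02.
have t_le_q : INR t <= INR q.
  have e1 : 1 <= exp 1 by have := exp_ineq1_le 1; lra.
  have er : 1 <= exp 1 * r by nra.
  have et : INR t <= exp 1 * INR t by nra.
  have := Rpower_ge1 er (proj1 a02); nra.
have [k [yk ky]] : exists k : nat, INR q * (L + 2) < INR k <= INR q * (L + 2) + 1.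
  by apply: exists_nat_between; nra.
exists q.-1, k.+1; rewrite prednK ?(ltnW q_gt1) // S_INR [k.+1.-1]/=; split => //.
- by rewrite t_gt0; apply/leP/INR_le; rewrite S_INR; nra.
- lra.
have tRpL : 1 <= INR t * Rpower r a * L by have := Rpower_ge1 r1 (proj1 a02); nra.
nra.
Qed.

Close Scope R_scope.

Theorem theorem2p3 :
  exists C : R, (0 < C)%R /\
  exists t0 : nat, exists N0 : nat,
  forall n t s : nat,
    N0 <= n -> t0 <= t -> 2 * t <= s -> 2 * s <= n ->
    exists e : rel 'I_n,
      simple_graph e /\
      (INR (alpha e) <=
         C * INR t
           * Rpower (INR n / INR s) (2 * INR t / (INR s - INR t))
           * ln (INR n / INR t))%R /\
      forall S : {set 'I_n}, #|S| = s ->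
        exists I : {set 'I_n}, I \subset S /\ #|I| = t /\ independent e I.
Proof.
exists 1000%R; split; first lra.
exists 1, 0 => n t s _ t_gt0 ts sn.
have [m [k [tk hk hm bound]]] := exists_parameters t_gt0 ts sn.
have sn' : s <= n by lia.
have tn : t <= n by lia.
have ts' : 0 < t <= s by rewrite t_gt0; lia.
have [e [e_simple alpha_lt_k e_sub]] := exists_graph_of_counting ts' (counting_condition
  (independent_prob_lt_half tk tn hk)
  (dense_prob_le_half t_gt0 ts sn' (dense_threshold_ge s t_gt0) hm)).
exists e; split => //; split => //.
by apply: Rle_trans bound; apply/le_INR/leP; lia.
Qed.
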